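(* For $n\ge 1$, the complete graph $K_n$ satisfies $\nu_*(K_n)=\frac{(n-1)n(n+1)(n+4)}{12}$.
   Context: For a finite simple graph $G=(V,E)$ with $\ell=|V|+|E|$, a construction sequence (c-sequence) is a bijection $x:\{1,\dots,\ell\}\to V\sqcup E$ such that every edge $e=uw$ satisfies $x^{-1}(e)>\max\{x^{-1}(u),x^{-1}(w)\}$. The cost of $x$ is $\nu(x)=\sum_{e=uw\in E}\big(2x^{-1}(e)-x^{-1}(u)-x^{-1}(w)\big)$, and $\nu_*(G)$ is the minimum of $\nu(x)$ over all c-sequences for $G$. *)

From mathcomp Require Import all_boot all_order all_algebra.
Set Implicit Arguments. Unset Strict Implicit. Unset Printing Implicit Defensive.

(* A finite simple graph: vertex set T (a finType), adjacency relation adj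
   (assumed symmetric and irreflexive where relevant).  An edge is a
   2-element set {u, w} with adj u w. *)
Definition is_edge (T : finType) (adj : rel T) (e : {set T}) : bool :=
  [exists u, exists w, (u != w) && adj u w && (e == [set u; w])].

Definition edge_t (T : finType) (adj : rel T) : finType :=
  {e : {set T} | is_edge adj e}.

Definition elem_t (T : finType) (adj : rel T) : finType :=
  (T + edge_t adj)%type.

Definition ell (T : finType) (adj : rel T) : nat := #|T| + #|edge_t adj|.

(* 1-based position x^{-1}(a) of a in the sequence x : {1..ell} -> V ⊔ E
   (indices shifted: 'I_ell is {0..ell-1}, so position = index + 1). *)
Definition pos (T : finType) (adj : rel T) (x : 'I_(ell adj) -> elem_t adj)
  (a : elem_t adj) : nat :=
  (index a (map x (enum 'I_(ell adj)))).+1.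

Definition cseq (T : finType) (adj : rel T) (x : 'I_(ell adj) -> elem_t adj)
  : Prop :=
  bijective x /\
  forall e : edge_t adj, forall u, u \in val e ->
    pos x (inl u) < pos x (inr e).

Definition cost (T : finType) (adj : rel T) (x : 'I_(ell adj) -> elem_t adj)
  : int :=
  (\sum_(e : edge_t adj)
     ((2 * pos x (inr e))%:Z - (\sum_(u in val e) pos x (inl u))%:Z))%R.

Definition nu_star_is (T : finType) (adj : rel T) (k : int) : Prop :=
  (exists x : 'I_(ell adj) -> elem_t adj, cseq x /\ cost x = k) /\
  (forall x : 'I_(ell adj) -> elem_t adj, cseq x -> (k <= cost x)%R).

Definition Kn_adj (n : nat) : rel 'I_n := fun i j => i != j.

(* Every vertex of K_n lies on n - 1 edges, and the positions of a construction
   sequence are exactly 1, ..., ell, so the cost is ell (ell + 1) - (n + 1) S,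
   where S is the sum of the positions of the vertices: one must maximise S.
   If k vertices precede v then so do at most 'C(k, 2) edges, since both
   endpoints of an edge precede it; hence v sits at position at most
   'C(k + 1, 2) + 1, and summing over k = 0, ..., n - 1 bounds S.  The bound is
   attained by listing every vertex immediately followed by its edges to the
   earlier vertices. *)

From mathcomp Require Import all_boot all_order all_algebra.
From mathcomp Require Import zify ring.
Set Implicit Arguments. Unset Strict Implicit. Unset Printing Implicit Defensive.

Section ConstructionSequences.

Variables (T : finType) (adj : rel T).
Local Notation elem := (elem_t adj).
Local Notation edge := (edge_t adj).
Local Notation ell := (ell adj).

Lemma card_edge (e : edge) : #|val e| = 2.
Proof.
case: e => A /= /existsP [u /existsP [w /andP [/andP [uw _] /eqP ->]]].
by apply/eqP/cards2P; exists u, w.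
Qed.

Definition degree (u : T) : nat := #|[set e : edge | u \in val e]|.

Lemma sum_incident (F : T -> nat) :
  \sum_(e : edge) \sum_(u in val e) F u = \sum_u degree u * F u.
Proof.
under eq_bigr do rewrite big_mkcond.
rewrite exchange_big; apply: eq_bigr => u _.
by rewrite -big_mkcond sum_nat_cond_const /degree cardsE.
Qed.

Lemma exists_bij_with_pos (f : elem -> 'I_ell) :
  injective f -> exists2 x, bijective x & forall a, pos x a = (f a).+1.
Proof.
move=> f_inj; have [|g fK gK] := inj_card_bij f_inj; first by rewrite card_ord card_sum.
exists g; first by exists f.
by move=> a; rewrite -{1}(fK a) /pos index_map ?index_enum_ord //; exact: can_inj gK.
Qed.

Variable x : 'I_ell -> elem.

Lemma pos_at : injective x -> forall i, pos x (x i) = i.+1.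
Proof. by move=> x_inj i; rewrite /pos index_map // index_enum_ord. Qed.

Lemma pos_inj : bijective x -> injective (pos x).
Proof.
move=> [g xK gK] a b; have x_inj := can_inj xK.
by rewrite -(gK a) -(gK b) !pos_at // => -[/val_inj ->].
Qed.

Lemma sum_pos : bijective x -> \sum_a pos x a = 'C(ell.+1, 2).
Proof.
move=> x_bij; have x_inj := bij_inj x_bij.
rewrite (reindex x) /=; last exact: onW_bij.
under eq_bigr do rewrite pos_at //.
by rewrite -bin2_sum big_nat_recl // big_mkord.
Qed.

Lemma card_pos_lt a :
  bijective x -> #|[pred b | pos x b < pos x a]| = (pos x a).-1.
Proof.
move=> x_bij; have x_inj := bij_inj x_bij; case: (x_bij) => g xK gK.
rewrite -(gK a) pos_at // -sum1_card (reindex x) /=; last exact: onW_bij.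
under eq_bigl do rewrite inE !pos_at // ltnS.
by rewrite (big_ord_narrow (ltnW (ltn_ord (g a)))) sum1_card card_ord.
Qed.

Lemma cost_regular d :
  (forall u, degree u = d) -> bijective x ->
  cost x = ((2 * 'C(ell.+1, 2))%:Z - ((d + 2) * \sum_v pos x (inl v))%:Z)%R.
Proof.
move=> deg_d x_bij; have := sum_pos x_bij; rewrite big_sumType /= => sum_all.
rewrite /cost GRing.sumrB -!(big_morph Posz PoszD (erefl 0%R)) sum_incident.
have -> : \sum_u degree u * pos x (inl u) = d * \sum_v pos x (inl v).
  by rewrite big_distrr; apply: eq_bigr => u _; rewrite deg_d.
rewrite -big_distrr -sum_all /= !PoszD !PoszM; ring.
Qed.

Definition earlier_vertices (v : T) : {set T} :=
  [set u | pos x (inl u) < pos x (inl v)].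

Lemma card_earlier_vertices_lt v : #|earlier_vertices v| < #|T|.
Proof.
rewrite -cardsT; apply: proper_card; apply/properP; split; first exact: subsetT.
by exists v; rewrite // inE ltnn.
Qed.

Lemma pos_vertex_le v :
  cseq x -> pos x (inl v) <= ('C(#|earlier_vertices v|.+1, 2)).+1.
Proof.
move=> [x_bij x_cseq].
rewrite -[pos x _]prednK // -card_pos_lt // ltnS binS bin1 addnC.
rewrite -(sum1_card [pred b | _]) big_sumType /= !sum1dep_card.
rewrite -/(earlier_vertices v) leq_add2l.
rewrite -(card_imset _ val_inj) -cards_draws; apply: subset_leq_card.
apply/subsetP => A /imsetP [e + ->]; rewrite (@in_set edge) => e_before.
rewrite in_set card_edge eqxx andbT; apply/subsetP => u u_e.
rewrite /earlier_vertices inE.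
exact: ltn_trans (x_cseq e u u_e) e_before.
Qed.

Lemma card_earlier_vertices_inj :
  bijective x -> injective (fun v => #|earlier_vertices v|).
Proof.
move=> x_bij u v /= eq_card.
have card_mono a b : pos x (inl a) < pos x (inl b) ->
    #|earlier_vertices a| < #|earlier_vertices b|.
  move=> ab; apply: proper_card; apply/properP; split.
    by apply/subsetP => w; rewrite !inE => /ltn_trans; apply.
  by exists a; rewrite !inE ?ltnn.
case: (ltngtP (pos x (inl u)) (pos x (inl v))) => [/card_mono|/card_mono|/pos_inj].
- by rewrite eq_card ltnn.
- by rewrite eq_card ltnn.
- by move=> /(_ x_bij) [].
Qed.

(* The numbers #|earlier_vertices v| are distinct and below #|T|, so they
   enumerate 0, ..., #|T| - 1. *)
Lemma sum_pos_vertex_le :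
  cseq x -> \sum_v pos x (inl v) <= \sum_(0 <= k < #|T|) ('C(k.+1, 2)).+1.
Proof.
move=> x_cseq; pose r v : 'I_#|T| := Ordinal (card_earlier_vertices_lt v).
have r_inj : injective r.
  by move=> u v /(congr1 val) /(card_earlier_vertices_inj x_cseq.1).
rewrite big_mkord (reindex r) /=; last by apply/onW_bij/inj_card_bij; rewrite ?card_ord.
by apply: leq_sum => v _; exact: pos_vertex_le.
Qed.

End ConstructionSequences.

Lemma triangular_lt j j' a a' :
  a <= j -> j < j' -> 'C(j.+1, 2) + a < 'C(j'.+1, 2) + a'.
Proof.
move=> a_le j_lt; have : 'C(j.+2, 2) <= 'C(j'.+1, 2) by exact: leq_bin2l.
by rewrite binS bin1; lia.
Qed.

Lemma triangular_inj j j' a a' : a <= j -> a' <= j' ->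
  'C(j.+1, 2) + a = 'C(j'.+1, 2) + a' -> (j, a) = (j', a').
Proof.
move=> a_le a'_le eq_code.
case: (ltngtP j j') => [/(triangular_lt a' a_le)|/(triangular_lt a a'_le)|eq_j].
- by rewrite eq_code ltnn.
- by rewrite eq_code ltnn.
- by move: eq_code; rewrite eq_j => /addnI ->.
Qed.

Section CompleteGraph.

Variable n : nat.
Local Notation Kn := (@Kn_adj n).

Lemma is_edge_Kn (A : {set 'I_n}) : is_edge Kn A = (#|A| == 2).
Proof.
apply/existsP/cards2P => [[u /existsP [w /andP [/andP [uw _] /eqP ->]]]|].
  by exists u, w.
by move=> [u [w [uw ->]]]; exists u; apply/existsP; exists w; rewrite /Kn_adj uw eqxx.
Qed.

Lemma card_edges_Kn_such (P : pred {set 'I_n}) :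
  #|[set e : edge_t Kn | P (val e)]| = #|[set A : {set 'I_n} | #|A| == 2 & P A]|.
Proof.
rewrite -(card_imset _ val_inj); apply: eq_card => A; rewrite inE.
apply/imsetP/andP => [[e + ->]|[A2 PA]]; first by rewrite inE -is_edge_Kn (valP e).
have A_edge : is_edge Kn A by rewrite is_edge_Kn.
by exists (Sub A A_edge); rewrite ?inE SubK.
Qed.

Lemma ell_Kn : ell Kn = 'C(n.+1, 2).
Proof.
rewrite /ell /edge_t card_ord card_sig binS bin1 addnC -[n in 'C(n, 2)]card_ord.
by rewrite -card_draws; congr (_ + _); apply: eq_card => A; rewrite !inE is_edge_Kn.
Qed.

Lemma degree_Kn u : degree Kn u = n.-1.
Proof.
pose pairs := [set A : {set 'I_n} | #|A| == 2].
have with_u : degree Kn u = #|pairs :&: [set A : {set 'I_n} | u \in A]|.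
  rewrite /degree (card_edges_Kn_such (fun A => u \in A)).
  by apply: eq_card => A; rewrite !inE.
have without_u : #|pairs :\: [set A : {set 'I_n} | u \in A]| = 'C(n.-1, 2).
  have -> : n.-1 = #|[set~ u]| by rewrite cardsC1 card_ord.
  rewrite -cards_draws; apply: eq_card => A; rewrite !inE andbC.
  by rewrite subsets_disjoint setCK disjoint_sym disjoints1 andbC.
have := cardsID [set A : {set 'I_n} | u \in A] pairs.
rewrite -with_u without_u card_draws card_ord.
have n_gt0 : 0 < n by apply: leq_ltn_trans (ltn_ord u).
by rewrite -[in 'C(n, 2)](prednK n_gt0) binS bin1; lia.
Qed.

(* [lo_end A] is the smaller element of A only when #|A| = 2. *)
Definition hi_end (A : {set 'I_n}) : nat := \max_(u in A) u.
Definition lo_end (A : {set 'I_n}) : nat := \sum_(u in A) u - hi_end A.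

Lemma edge_Kn_ends (e : edge_t Kn) : exists u w : 'I_n,
  [/\ u < w, val e = [set u; w], hi_end (val e) = w & lo_end (val e) = u].
Proof.
have [a [b [ab e_ab]]] := cards2P _ (introT eqP (card_edge e)).
have [u [w [uw e_uw]]] : exists u w : 'I_n, u < w /\ val e = [set u; w].
  case: (ltngtP a b) => [|ba|/val_inj eq_ab]; first by exists a, b.
    by exists b, a; rewrite setUC.
  by rewrite eq_ab eqxx in ab.
have u_notin : u \notin [set w] by rewrite inE neq_ltn uw.
exists u, w; split; rewrite // /lo_end /hi_end e_uw !big_setU1 // !big_set1 /=; lia.
Qed.

(* The optimal sequence in blocks: block w lists vertex w, then the edges
   {u, w} with u < w by increasing u; [slot] gives (block, offset in block). *)
Definition slot (a : elem_t Kn) : nat * nat :=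
  match a with
  | inl v => (val v, 0)
  | inr e => (hi_end (val e), (lo_end (val e)).+1)
  end.

Lemma slot_bounded a : (slot a).2 <= (slot a).1 < n.
Proof.
case: a => [v|e] /=; first by rewrite ltn_ord.
by have [u [w [uw _ -> ->]]] := edge_Kn_ends e; rewrite uw ltn_ord.
Qed.

Lemma slot_inj : injective slot.
Proof.
case=> [v|e] [v'|e'] //=.
  by move=> [/val_inj ->].
have [u [w [_ e_uw -> ->]]] := edge_Kn_ends e.
have [u' [w' [_ e'_uw -> ->]]] := edge_Kn_ends e'.
move=> [/val_inj eq_w /val_inj eq_u]; congr inr; apply: val_inj.
by rewrite e_uw e'_uw eq_w eq_u.
Qed.

Definition rank (a : elem_t Kn) : nat := 'C((slot a).1.+1, 2) + (slot a).2.

Lemma rank_lt a : rank a < ell Kn.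
Proof.
have /andP [le_a lt_n] := slot_bounded a.
by rewrite ell_Kn -[X in _ < X]addn0; exact: triangular_lt.
Qed.

Lemma rank_inj : injective rank.
Proof.
move=> a b /triangular_inj eq_slot; apply: slot_inj.
have /andP [le_a _] := slot_bounded a; have /andP [le_b _] := slot_bounded b.
case: (slot a) (slot b) le_a le_b eq_slot => [j i] [j' i'] /= le_a le_b.
by move=> /(_ le_a le_b) [-> ->].
Qed.

Lemma optimal_cseq_Kn : exists2 x : 'I_(ell Kn) -> elem_t Kn,
  cseq x & \sum_v pos x (inl v) = \sum_(0 <= k < n) ('C(k.+1, 2)).+1.
Proof.
pose f a : 'I_(ell Kn) := Ordinal (rank_lt a).
have f_inj : injective f by move=> a b /(congr1 val) /rank_inj.
have [x x_bij pos_x] := exists_bij_with_pos f_inj.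
exists x.
  split=> // e v; rewrite !pos_x ltnS /f /rank /= addn0.
  have [u [w [uw e_uw -> ->]]] := edge_Kn_ends e.
  rewrite e_uw !inE => /orP [] /eqP -> /=; last by rewrite addnS ltnS leq_addr.
  by have := leq_bin2l 2 (ltnW uw : u.+1 <= w.+1); lia.
by rewrite big_mkord; apply: eq_bigr => v _; rewrite pos_x /f /rank /= addn0.
Qed.

Lemma cost_Kn (x : 'I_(ell Kn) -> elem_t Kn) : 0 < n -> bijective x ->
  cost x = ((2 * 'C(('C(n.+1, 2)).+1, 2))%:Z - (n.+1 * \sum_v pos x (inl v))%:Z)%R.
Proof.
by move=> n_gt0 x_bij; rewrite (cost_regular degree_Kn x_bij) ell_Kn addn2 prednK.
Qed.

End CompleteGraph.

Lemma sum_triangular_succ n :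
  \sum_(0 <= k < n) ('C(k.+1, 2)).+1 = n + 'C(n.+1, 3).
Proof.
elim: n => [|n IH]; first by rewrite big_geq.
by rewrite big_nat_recr //= IH [in RHS]binS; lia.
Qed.

Lemma min_cost_Kn_closed_form n : 0 < n ->
  ((2 * 'C(('C(n.+1, 2)).+1, 2))%:Z - (n.+1 * (n + 'C(n.+1, 3)))%:Z)%R
  = intdiv.divz ((n%:Z - 1) * n%:Z * (n%:Z + 1) * (n%:Z + 4))%R 12.
Proof.
case: n => // m _.
have bin2E k : 2 * 'C(k.+1, 2) = k.+1 * k by rewrite -mul_bin_diag bin1.
have bin3E : 6 * 'C(m.+2, 3) = m.+2 * (m.+1 * m).
  by rewrite -[6]/(2 * 3) -mulnA -mul_bin_diag mulnCA bin2E.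
rewrite bin2E; set L := 'C(m.+2, 2); set Q := 'C(m.+2, 3).
have twoL : (2 * L%:Z = (m.+2 * m.+1)%N%:Z)%R by rewrite -bin2E.
have sixQ : (6 * Q%:Z = (m.+2 * (m.+1 * m))%N%:Z)%R by rewrite -bin3E.
rewrite -[LHS](@intdiv.mulzK _ 12) //; apply: (congr1 (intdiv.divz ^~ 12)).
have -> : (((L.+1 * L)%N%:Z - (m.+2 * (m.+1 + Q))%N%:Z) * 12 =
   3 * ((2 * L%:Z + 2) * (2 * L%:Z)) - 12 * (m.+2 * m.+1)%N%:Z
     - 2 * m.+2%:Z * (6 * Q%:Z))%R.
  by ring.
by rewrite twoL sixQ; ring.
Qed.

Theorem theorem8 (n : nat) : (1 <= n)%N ->
  nu_star_is (@Kn_adj n)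
    (intdiv.divz ((n%:Z - 1) * n%:Z * (n%:Z + 1) * (n%:Z + 4))%R 12).
Proof.
move=> n_gt0; rewrite -(min_cost_Kn_closed_form n_gt0) -sum_triangular_succ; split.
  have [x x_cseq sum_x] := optimal_cseq_Kn n.
  exists x; split; rewrite // (cost_Kn n_gt0 x_cseq.1).
  by congr (_ - Posz (_ * _))%R.
move=> x x_cseq; rewrite (cost_Kn n_gt0 x_cseq.1).
rewrite Num.Theory.lerD2l Num.Theory.lerN2 lez_nat leq_mul2l.
by have := sum_pos_vertex_le x_cseq; rewrite card_ord => ->; rewrite orbT.
Qed.
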